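(* Let $1\le p\le\infty$ and $m\in\mathbb N_0$. Let $\varphi\in C_0^k(\mathbb R)$ with $\operatorname{supp}\varphi\subset[0,1]$, $\varphi>0$ on $(0,1)$ and $k>m+1$, and assume that $\varphi^{(k)}$ has only finitely many zeros in $[0,1]$. Then $$\frac{|\varphi^{(r)}(t)\,\varphi^{(\alpha)}(t)|}{|\varphi(t)|^{1/p}}\in L_\infty([0,1])$$ for all $r,\alpha\in\mathbb N_0$ with $r+\alpha\le m$.
   Context: $C_0^k(\mathbb R)$: compactly supported functions whose derivatives up to order $k$ are uniformly continuous. *)

From HB Require Import structures.
From mathcomp Require Import all_boot all_order all_algebra.
From mathcomp Require Import all_classical all_reals all_analysis.
Set Implicit Arguments. Unset Strict Implicit. Unset Printing Implicit Defensive.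
Import Order.TTheory GRing.Theory Num.Theory.
Import numFieldNormedType.Exports.
Local Open Scope classical_set_scope.
Local Open Scope ring_scope.

Definition supp (R : realType) (f : R -> R) : set R := closure [set x | f x != 0].

Definition C0k (R : realType) (k : nat) (f : R -> R) : Prop :=
  (forall n, (n < k)%N -> forall x : R, derivable (derive1n n f) x 1) /\
  (forall n, (n <= k)%N -> unif_continuous (derive1n n f)) /\
  compact (supp f).

Definition inv_exp (R : realType) (p : \bar R) : R :=
  match p with r%:E => r^-1 | _ => 0 end.

Definition Linfty01 (R : realType) (g : R -> R) : Prop :=
  measurable_fun (`[0%R, 1%R] : set R) g /\
  ('N[(@lebesgue_measure R)]_(+oo%E) [EFin \o (g \_ `[0%R, 1%R])] < +oo)%E.

From HB Require Import structures.
From mathcomp Require Import all_boot all_order all_algebra.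
From mathcomp Require Import all_classical all_reals all_analysis.
From mathcomp Require Import ess_sup_inf measurable_realfun.
From mathcomp Require Import ring lra zify.
Set Implicit Arguments. Unset Strict Implicit. Unset Printing Implicit Defensive.
Import Order.TTheory GRing.Theory Num.Theory.
Import numFieldNormedType.Exports.
Local Open Scope classical_set_scope.
Local Open Scope ring_scope.

(* Near the endpoint 0 all derivatives phi^(j), j < k, vanish and phi^(k) has
   no zero on some (0, e]; by the mean value theorem, starting from phi > 0 and
   going up, then from the sign of phi^(k) and going down, every phi^(j) with
   j <= k is positive on (0, e].  There G = (phi^(i+1))^2 - 2 phi^(i) phi^(i+2)
   vanishes at 0 and has derivative -2 phi^(i) phi^(i+3) <= 0, so
   (phi^(j)(t))_j is log-concave up to a factor 2, which iterates to
   |phi^(r) phi^(a)| <= 2^(r a) phi |phi^(r+a)|.  The endpoint 1 is handled by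
   reflection t |-> 1 - t and phi is bounded below in between, hence
   |phi^(r) phi^(a)| <= C |phi| on [0, 1].  Since the numerator is also bounded
   and 0 <= 1/p <= 1, the quotient is bounded by C + M. *)

Section real_facts.
Variable R : realType.
Implicit Types (f : R -> R) (a b : R).

Lemma unif_continuous_continuous f : unif_continuous f -> continuous f.
Proof.
move=> /unif_continuousP f_uc x; apply/cvgrPdist_lt => e e_gt0.
have [d d_gt0 Hd] := f_uc e e_gt0.
near=> y.
have xy : ball x d y by near: y; exists d => // z /=; rewrite -ball_normE.
by have := Hd (x, y) xy; rewrite /= -ball_normE.
Unshelve. all: by end_near. Qed.

Lemma continuous_of_is_derive f (df : R -> R) :
  (forall x : R, is_derive x 1 f (df x)) -> continuous f.
Proof.
move=> f_df x; apply: differentiable_continuous.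
by apply/derivable1_diffP; exact: (f_df x).(ex_derive).
Qed.

Lemma MVT_is_derive f (df : R -> R) a b :
  (forall x : R, is_derive x 1 f (df x)) -> a < b ->
  exists2 c, a < c < b & f b - f a = df c * (b - a).
Proof.
move=> f_df ab.
have [c] := MVT ab (fun x _ => f_df x)
  (continuous_subspaceT (continuous_of_is_derive f_df)).
by rewrite in_itv /= => c_ab E; exists c.
Qed.

Lemma is_derive_reflect f (df c x : R) :
  is_derive (c - x) 1 f df -> is_derive x 1 (fun s => f (c - s)) (- df).
Proof.
move=> f_df.
have refl_d : is_derive x 1 (fun s : R => c - s) (0 - 1).
  exact: is_deriveB (is_derive_cst c x 1) (is_derive_id x 1).
have refl_dv : derivable (fun s : R => c - s) x 1 := refl_d.(ex_derive).
have f_dv : derivable f (c - x) 1 := f_df.(ex_derive).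
apply: DeriveDef.
  by apply/derivable1_diffP; apply: differentiable_comp; exact/derivable1_diffP.
rewrite -derive1E (derive1_comp refl_dv f_dv) !derive1E.
by rewrite (@derive_val _ _ _ _ _ _ _ f_df) (@derive_val _ _ _ _ _ _ _ refl_d) sub0r mulrN1.
Qed.

Lemma continuous_vanishing_left_eq0 f a :
  {for a, continuous f} -> (forall y, y < a -> f y = 0) -> f a = 0.
Proof.
move=> f_cont f_eq0.
apply: (norm_cvg_unique (cvg_at_left_filter f_cont)).
apply: cvg_near_cst; near=> y; apply: f_eq0; near: y; exact: nbhs_left_lt.
Unshelve. all: by end_near. Qed.

Lemma continuous_vanishing_right_eq0 f a :
  {for a, continuous f} -> (forall y, a < y -> f y = 0) -> f a = 0.
Proof.
move=> f_cont f_eq0.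
apply: (norm_cvg_unique (cvg_at_right_filter f_cont)).
apply: cvg_near_cst; near=> y; apply: f_eq0; near: y; exact: nbhs_right_gt.
Unshelve. all: by end_near. Qed.

Lemma finite_set_isolated (S : set R) (x0 : R) : finite_set S ->
  exists2 d, 0 < d & forall t, S t -> t != x0 -> d <= `|t - x0|.
Proof.
move=> /finite_fsetP[X ->].
suff [d d_gt0 Hd] : exists2 d, 0 < d &
    forall t, t \in finmap.enum_fset X -> t != x0 -> d <= `|t - x0|.
  by exists d => // t Xt; apply: Hd.
elim: (finmap.enum_fset X) => [|y s [d d_gt0 Hd]]; first by exists 1.
have [->|yx0] := eqVneq y x0.
  by exists d => // t; rewrite inE => /orP[/eqP -> /eqP //|]; exact: Hd.
exists (Num.min d `|y - x0|); first by rewrite lt_min d_gt0 normr_gt0 subr_eq0 yx0.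
move=> t; rewrite inE => /orP[/eqP -> _|ts tx0]; first by rewrite ge_min lexx orbT.
by rewrite ge_min Hd.
Qed.

Lemma continuous_bounded_itv f a b : a <= b -> continuous f ->
  exists2 M, 0 <= M & forall t, a <= t <= b -> `|f t| <= M.
Proof.
move=> ab f_cont.
have nf_cont : continuous (fun t => `|f t|).
  by move=> x; apply: continuous_comp (f_cont x) _; exact: norm_continuous.
have [c _ Hc] := EVT_max ab (continuous_subspaceT nf_cont).
by exists `|f c| => // t t_ab; apply: Hc; rewrite in_itv.
Qed.

Lemma continuous_pos_lower_bound f a b : a <= b -> continuous f ->
  (forall t, a <= t <= b -> 0 < f t) ->
  exists2 c, 0 < c & forall t, a <= t <= b -> c <= f t.
Proof.
move=> ab f_cont f_gt0.
have [c c_ab Hc] := EVT_min ab (continuous_subspaceT f_cont).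
move: c_ab; rewrite in_itv /= => c_ab.
by exists (f c); [exact: f_gt0 | move=> t t_ab; apply: Hc; rewrite in_itv].
Qed.

Lemma inv_measurable (D : set R) : measurable_fun D (@GRing.inv R).
Proof.
apply: measurable_funTS.
rewrite -(setUv [set 0 : R]); apply/measurable_funU => //; first exact: measurableC.
split.
  have inv0 : {in [set 0 : R], cst 0 =1 GRing.inv}.
    by move=> x; rewrite inE => ->; rewrite invr0.
  exact: eq_measurable_fun inv0 (measurable_cst _).
apply: open_continuous_measurable_fun.
  by apply: closed_openC; apply: accessible_closed_set1; exact: hausdorff_accessible.
by move=> x; rewrite inE => /eqP x_neq0; exact: inv_continuous.
Qed.

Lemma measurable_mul_div_powR (D : set R) (f g h : R -> R) (s : R) :
  continuous f -> continuous g -> continuous h ->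
  measurable_fun D (fun t => `|f t * g t| / `|h t| `^ s).
Proof.
move=> f_cont g_cont h_cont.
have cont_meas (u : R -> R) : continuous u -> measurable_fun D u.
  by move=> u_cont; apply: measurable_funTS; exact: continuous_measurable_fun.
apply: measurable_funM.
  by apply: measurableT_comp => //; apply: measurable_funM; exact: cont_meas.
apply: (@measurableT_comp _ _ _ _ _ _ (@GRing.inv R) _ (fun t => `|h t| `^ s)).
  exact: inv_measurable.
apply: (@measurableT_comp _ _ _ _ _ _ (@powR R ^~ s) _ (fun t => `|h t|)).
  exact: measurable_powR.
by apply: measurableT_comp => //; exact: cont_meas.
Qed.

Lemma div_powR_le (x y C M s : R) : 0 <= s <= 1 -> 0 <= C -> 0 <= M ->
  0 <= x -> 0 <= y -> x <= C * y -> x <= M -> `|x / y `^ s| <= C + M.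
Proof.
move=> /andP[s_ge0 s_le1] C_ge0 M_ge0 x_ge0 y_ge0 xCy xM.
have [y0|y_neq0] := eqVneq y 0.
  have -> : x = 0 by apply/eqP; rewrite eq_le x_ge0 andbT -(mulr0 C) -y0.
  by rewrite mul0r normr0 addr_ge0.
have y_gt0 : 0 < y by rewrite lt0r y_neq0.
have ys_gt0 : 0 < y `^ s := powR_gt0 _ y_gt0.
rewrite ger0_norm ?ler_pdivrMr //; last by rewrite divr_ge0 // ltW.
have [y_le1|y_gt1] := leP y 1.
  have : y <= y `^ s by apply: ger1_powR => //; rewrite y_gt0.
  move=> /(ler_wpM2l C_ge0) ?; have := mulr_ge0 M_ge0 (ltW ys_gt0).
  lra.
have : 1 <= y `^ s by rewrite -(powRr0 y) ler_powR // ltW.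
move=> /(ler_peMr M_ge0) ?; have := mulr_ge0 C_ge0 (ltW ys_gt0).
lra.
Qed.

Lemma Linfty01_bound (g : R -> R) (M : R) :
  measurable_fun (`[0, 1] : set R) g -> (forall t, 0 <= t <= 1 -> `|g t| <= M) -> Linfty01 g.
Proof.
move=> g_meas g_le; split => //.
rewrite unlock /=; case: ifPn => // _.
apply: (@le_lt_trans _ _ (Num.max M 0)%:E); last exact: ltry.
apply/ess_supP; apply: nearW => x /=.
rewrite patchE lee_fin; case: ifPn => [|_]; last by rewrite normr0 le_max lexx orbT.
by rewrite inE /= in_itv /= => x01; rewrite le_max g_le.
Qed.

Lemma inv_exp_itv (p : \bar R) : (1%:E <= p)%E -> 0 <= inv_exp p <= 1.
Proof.
case: p => [p| |] //=; last by rewrite lexx ler01.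
by rewrite lee_fin => p_ge1; rewrite invr_ge0 invf_le1; lra.
Qed.

End real_facts.

Section log_concave_sequence.
Variables (R : realFieldType) (c : R) (x : nat -> R) (n : nat).
Hypotheses (c_ge0 : 0 <= c) (x_gt0 : forall j, (j <= n)%N -> 0 < x j).
Hypothesis x_sq_le : forall i, (i.+2 <= n)%N -> x i.+1 ^+ 2 <= c * x i * x i.+2.

Lemma shift_mul_le i d : (i + d < n)%N ->
  x i.+1 * x (i + d)%N <= c ^+ d * x i * x (i + d).+1.
Proof.
elim: d => [|d IH] idn; first by rewrite addn0 expr0 mul1r mulrC.
rewrite addnS; set u := x (i + d)%N; set v := x (i + d).+1.
have xi1_gt0 : 0 < x i.+1 by apply: x_gt0; lia.
have u_gt0 : 0 < u by apply: x_gt0; lia.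
have v_gt0 : 0 < v by apply: x_gt0; lia.
have IH' : x i.+1 * u <= c ^+ d * x i * v by apply: IH; lia.
have sq_le : v ^+ 2 <= c * u * x (i + d).+2 by apply: x_sq_le; lia.
have le := ler_pM (ltW (mulr_gt0 xi1_gt0 u_gt0)) (ltW (exprn_gt0 2 v_gt0)) IH' sq_le.
rewrite -(ler_pM2r (mulr_gt0 u_gt0 v_gt0)) exprS.
by apply: le_trans (le_trans _ le) _; rewrite le_eqVlt; apply/orP; left; apply/eqP; ring.
Qed.

Lemma mul_le_pow_mul r a : (r + a <= n)%N ->
  x r * x a <= c ^+ (r * a) * x 0 * x (r + a)%N.
Proof.
elim: r => [|r IH] ran; first by rewrite mul0n expr0 mul1r.
set u := x r; set w := x (r + a)%N.
have u_gt0 : 0 < u by apply: x_gt0; lia.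
have w_gt0 : 0 < w by apply: x_gt0; lia.
have xa_gt0 : 0 < x a by apply: x_gt0; lia.
have xr1_gt0 : 0 < x r.+1 by apply: x_gt0; lia.
have IH' : u * x a <= c ^+ (r * a) * x 0 * w by apply: IH; lia.
have shift : x r.+1 * w <= c ^+ a * u * x (r + a).+1 by apply: shift_mul_le; lia.
have le := ler_pM (ltW (mulr_gt0 u_gt0 xa_gt0)) (ltW (mulr_gt0 xr1_gt0 w_gt0)) IH' shift.
rewrite -(ler_pM2r (mulr_gt0 u_gt0 w_gt0)) mulSn exprD addSn.
by apply: le_trans (le_trans _ le) _; rewrite le_eqVlt; apply/orP; left; apply/eqP; ring.
Qed.

End log_concave_sequence.

Definition derivative_chain (R : realType) (f : nat -> R -> R) (K : nat) : Prop :=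
  (forall j, (j < K)%N -> forall x : R, is_derive x 1 (f j) (f j.+1 x)) /\
  continuous (f K).

Section derivative_chain.
Variables (R : realType) (f : nat -> R -> R) (K : nat).
Hypothesis f_chain : derivative_chain f K.

Lemma chain_continuous j : (j <= K)%N -> continuous (f j).
Proof.
case: f_chain => f_d fK_cont; rewrite leq_eqVlt => /orP[/eqP -> //|jK].
exact: continuous_of_is_derive (f_d _ jK).
Qed.

Lemma chain_reflect (c : R) :
  derivative_chain (fun j s => (-1) ^+ j * f j (c - s)) K.
Proof.
case: f_chain => f_d fK_cont; split => [j jK x|].
  have df : is_derive x 1 (fun s => (-1) ^+ j * f j (c - s)) ((-1) ^+ j * - f j.+1 (c - x)).
    exact (is_deriveZ ((-1) ^+ j) (is_derive_reflect (f_d j jK (c - x)))).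
  by apply: is_derive_eq df _; rewrite exprS; ring.
have refl_cont : continuous (fun s : R => c - s).
  by move=> x; apply: cvgB; [exact: cvg_cst | exact: cvg_id].
move=> x; exact (continuous_comp (continuous_comp (refl_cont x) (fK_cont (c - x)))
  (@mulrl_continuous _ ((-1) ^+ K) _)).
Qed.

Variable e : R.
Hypotheses (e_gt0 : 0 < e) (f_eq0 : forall j, (j < K)%N -> f j 0 = 0).
Hypotheses (fK_neq0 : forall t, 0 < t <= e -> f K t != 0)
  (f0_gt0 : forall t, 0 < t <= e -> 0 < f 0 t).

Lemma chain_exists_gt0 j : (j <= K)%N ->
  forall t, 0 < t <= e -> exists2 s, 0 < s <= t & 0 < f j s.
Proof.
case: f_chain => f_d _; elim: j => [|j IH] jK t te.
  by exists t; [rewrite lexx andbT; case/andP: te | exact: f0_gt0].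
have [s /andP[s_gt0 st] fs_gt0] := IH (ltnW jK) t te.
have [u /andP[u_gt0 us]] := MVT_is_derive (f_d _ jK) s_gt0.
rewrite (f_eq0 jK) !subr0 => fs.
exists u; first by rewrite u_gt0 (ltW (lt_le_trans us st)).
by rewrite -(pmulr_lgt0 _ s_gt0) -fs.
Qed.

Lemma chain_top_gt0 t : 0 < t <= e -> 0 < f K t.
Proof.
move=> te; have [s /andP[s_gt0 st] fs_gt0] := chain_exists_gt0 (leqnn K) te.
rewrite lt0r fK_neq0 //= leNgt; apply/negP => ft_lt0.
have [|u] := IVT (v := 0) st (continuous_subspaceT (chain_continuous (leqnn K))).
  by rewrite ge_min le_max (ltW fs_gt0) (ltW ft_lt0) orbT.
rewrite in_itv /= => /andP[su ut] fu0.
have ue : 0 < u <= e by case/andP: te => _ te; rewrite (lt_le_trans s_gt0 su) (le_trans ut te).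
by move: (fK_neq0 ue); rewrite fu0 eqxx.
Qed.

Lemma chain_gt0 j : (j <= K)%N -> forall t, 0 < t <= e -> 0 < f j t.
Proof.
case: f_chain => f_d _ jK; rewrite -(subKn jK).
elim: (K - j)%N (leq_subr j K) => [|d IH] dK t te; first by rewrite subn0 chain_top_gt0.
have dK' : (K - d.+1 < K)%N by lia.
case/andP: (te) => t_gt0 t_le.
have [s /andP[s_gt0 st]] := MVT_is_derive (f_d _ dK') t_gt0.
rewrite (f_eq0 dK') !subr0 => ->; rewrite pmulr_lgt0 //.
have -> : (K - d.+1).+1 = (K - d)%N by lia.
by apply: IH; [exact: ltnW | rewrite s_gt0 (ltW (lt_le_trans st t_le))].
Qed.

Lemma chain_sq_le i : (i + 3 <= K)%N -> forall t, 0 <= t <= e ->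
  f i.+1 t ^+ 2 <= 2 * f i t * f i.+2 t.
Proof.
case: f_chain => f_d _ iK t /andP[t_ge0 te].
pose G := f i.+1 * f i.+1 - 2 \*: (f i * f i.+2).
have GE s : G s = f i.+1 s * f i.+1 s - 2 * (f i s * f i.+2 s) by [].
have G_d (x : R) : is_derive x 1 G (- 2 * (f i x * f i.+3 x)).
  have d0 := f_d i ltac:(lia) x; have d1 := f_d i.+1 ltac:(lia) x.
  have d2 := f_d i.+2 ltac:(lia) x.
  apply: is_derive_eq (is_deriveB (is_deriveM d1 d1) (is_deriveZ 2 (is_deriveM d0 d2))) _.
  by rewrite /GRing.scale /=; ring.
suff : G t <= 0 by rewrite GE expr2; lra.
have G0 : G 0 = 0 by rewrite GE !f_eq0 //; [ring | lia | lia | lia].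
case: (ltrgt0P t) t_ge0 => // [t_gt0 _|-> _]; last by rewrite G0.
have [s /andP[s_gt0 st]] := MVT_is_derive G_d t_gt0.
rewrite G0 !subr0 => ->; rewrite pmulr_lle0 // mulNr oppr_le0.
have se : 0 < s <= e by rewrite s_gt0 (ltW (lt_le_trans st te)).
by rewrite !mulr_ge0 // ltW // chain_gt0 //; lia.
Qed.

Lemma chain_mul_le r a : (r + a < K)%N -> exists2 C, 0 <= C &
  forall t, 0 <= t <= e -> `|f r t * f a t| <= C * f 0 t.
Proof.
move=> raK.
have [M M_ge0 HM] := continuous_bounded_itv (ltW e_gt0) (chain_continuous (ltnW raK)).
exists (2 ^+ (r * a) * M); first by rewrite mulr_ge0 // exprn_ge0.
move=> t /andP[t_ge0 te]; case: (ltrgt0P t) t_ge0 => // [t_gt0 _|-> _]; last first.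
  have fr0 : f r 0 = 0 by apply: f_eq0; lia.
  have f00 : f 0 0 = 0 by apply: f_eq0; lia.
  by rewrite fr0 f00 mul0r normr0 mulr0.
have te' : 0 < t <= e by rewrite t_gt0.
have ft_gt0 j : (j <= K)%N -> 0 < f j t by move=> jK; exact: chain_gt0.
have ft_sq_le i : (i.+2 <= K.-1)%N -> f i.+1 t ^+ 2 <= 2 * f i t * f i.+2 t.
  by move=> iK; apply: chain_sq_le; [lia | rewrite (ltW t_gt0)].
have := @mul_le_pow_mul _ 2 (f ^~ t) K.-1 (ler0n _ 2)
  (fun j jK => ft_gt0 j ltac:(lia)) ft_sq_le r a ltac:(lia).
rewrite ger0_norm; last by rewrite mulr_ge0 // ltW // ft_gt0 //; lia.
move=> le; apply: le_trans le _; rewrite [_ * M * _]mulrAC.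
apply: ler_wpM2l; first by rewrite mulr_ge0 ?exprn_ge0 // ltW // ft_gt0.
by apply: le_trans (ler_norm _) (HM _ _); rewrite (ltW t_gt0).
Qed.

End derivative_chain.

Section bump.
Variables (R : realType) (k : nat) (phi : R -> R).
Hypotheses (phi_C0k : C0k k phi) (supp_phi : supp phi `<=` `[0, 1]).
Hypothesis phi_gt0 : forall t : R, 0 < t < 1 -> 0 < phi t.
Hypothesis zeros_finite :
  finite_set [set t : R | t \in `[0, 1] /\ derive1n k phi t = 0].

Lemma C0k_chain : derivative_chain (fun j => derive1n j phi) k.
Proof.
case: phi_C0k => phi_d [phi_uc _]; split => [j jk x|].
  by rewrite derive1nS derive1E; exact: derivableP (phi_d j jk x).
exact: unif_continuous_continuous (phi_uc k (leqnn k)).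
Qed.

Lemma derive1n_continuous j : (j <= k)%N -> continuous (derive1n j phi).
Proof. exact: (chain_continuous C0k_chain). Qed.

Lemma derive1n_out01 j x : x < 0 \/ 1 < x -> derive1n j phi x = 0.
Proof.
elim: j x => [|j IH] x x_out.
  rewrite derive1n0; apply/eqP; apply: contraT => phix_neq0.
  have /supp_phi : supp phi x by apply: subset_closure.
  by rewrite /= in_itv /=; case: x_out => ? /andP[? ?]; lra.
rewrite derive1nS derive1E (@near_eq_derive _ _ _ _ (cst 0)) ?derive_cst //.
case: x_out => [x_lt0|x_gt1]; near=> y; apply: IH.
  by left; near: y; exact: lt_nbhsl x_lt0.
by right; near: y; exact: lt_nbhsr x_gt1.
Unshelve. all: by end_near. Qed.

Lemma derive1n_at0 j : (j <= k)%N -> derive1n j phi 0 = 0.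
Proof.
move=> jk; apply: continuous_vanishing_left_eq0 => [|y y_lt0].
  exact: derive1n_continuous.
by apply: derive1n_out01; left.
Qed.

Lemma derive1n_at1 j : (j <= k)%N -> derive1n j phi 1 = 0.
Proof.
move=> jk; apply: continuous_vanishing_right_eq0 => [|y y_gt1].
  exact: derive1n_continuous.
by apply: derive1n_out01; right.
Qed.

Lemma derive1n_top_isolated x0 : exists2 e, 0 < e <= 1 / 4 &
  forall t, 0 <= t <= 1 -> 0 < `|t - x0| <= e -> derive1n k phi t != 0.
Proof.
have [d d_gt0 Hd] := finite_set_isolated x0 zeros_finite.
exists (Num.min (d / 2) (1 / 4)).
  by rewrite lt_min ge_min lexx orbT andbT; apply/andP; split; lra.
move=> t t01 /andP[tx0_gt0 tx0_le]; apply/eqP => Dt0.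
have tx0 : t != x0 by rewrite -subr_eq0 -normr_gt0.
have t_in : t \in `[0, 1] by rewrite in_itv.
have := Hd t (conj t_in Dt0) tx0.
by move: tx0_le; rewrite le_min => /andP[? ?]; lra.
Qed.

Lemma derive1n_mul_le_left r a : (r + a < k)%N -> exists2 e, 0 < e <= 1 / 4 &
  exists2 C, 0 <= C & forall t, 0 <= t <= e ->
    `|derive1n r phi t * derive1n a phi t| <= C * phi t.
Proof.
move=> rak; have [e /andP[e_gt0 e_le] Dk_neq0] := derive1n_top_isolated 0.
exists e; first by rewrite e_gt0.
have Dk_neq0' t : 0 < t <= e -> derive1n k phi t != 0.
  move=> /andP[t_gt0 te]; apply: Dk_neq0; rewrite ?subr0 ?gtr0_norm //; lra.
have phi_gt0' t : 0 < t <= e -> 0 < derive1n 0 phi t.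
  by move=> /andP[t_gt0 te]; rewrite derive1n0; apply: phi_gt0; lra.
have at0 j : (j < k)%N -> derive1n j phi 0 = 0 by move=> jk; exact/derive1n_at0/ltnW.
have [C C_ge0 HC] := chain_mul_le C0k_chain e_gt0 at0 Dk_neq0' phi_gt0' rak.
by exists C => // t te; rewrite -[phi t]/(derive1n 0 phi t); exact: HC.
Qed.

Lemma derive1n_mul_le_right r a : (r + a < k)%N -> exists2 e, 0 < e <= 1 / 4 &
  exists2 C, 0 <= C & forall t, 1 - e <= t <= 1 ->
    `|derive1n r phi t * derive1n a phi t| <= C * phi t.
Proof.
move=> rak; have [e /andP[e_gt0 e_le] Dk_neq0] := derive1n_top_isolated 1.
exists e; first by rewrite e_gt0.
pose h j s := (-1) ^+ j * derive1n j phi (1 - s).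
have h_chain : derivative_chain h k := chain_reflect C0k_chain 1.
have h_eq0 j : (j < k)%N -> h j 0 = 0.
  by move=> jk; rewrite /h subr0 derive1n_at1 ?mulr0 // ltnW.
have hk_neq0 t : 0 < t <= e -> h k t != 0.
  move=> /andP[t_gt0 te]; rewrite /h mulf_eq0 signr_eq0 /=; apply: Dk_neq0.
    by apply/andP; split; lra.
  by rewrite addrAC subrr add0r normrN gtr0_norm // t_gt0.
have h0_gt0 t : 0 < t <= e -> 0 < h 0 t.
  by move=> /andP[t_gt0 te]; rewrite /h expr0 mul1r derive1n0; apply: phi_gt0; lra.
have [C C_ge0 HC] := chain_mul_le h_chain e_gt0 h_eq0 hk_neq0 h0_gt0 rak.
exists C => // t /andP[te t1]; have := HC (1 - t) ltac:(lra).
rewrite /h subKr !normrM !normrX normrN1 !expr1n !mul1r.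
by rewrite derive1n0 -normrM.
Qed.

Lemma derive1n_mul_le_phi r a : (r + a < k)%N -> exists2 C, 0 <= C &
  forall t, 0 <= t <= 1 -> `|derive1n r phi t * derive1n a phi t| <= C * `|phi t|.
Proof.
move=> rak.
have [e0 /andP[e0_gt0 e0_le] [C0 C0_ge0 HC0]] := derive1n_mul_le_left rak.
have [e1 /andP[e1_gt0 e1_le] [C1 C1_ge0 HC1]] := derive1n_mul_le_right rak.
have [c c_gt0 phi_ge_c] : exists2 c, 0 < c & forall t, e0 <= t <= 1 - e1 -> c <= phi t.
  apply: continuous_pos_lower_bound; first lra.
    by have := derive1n_continuous (leq0n k); rewrite derive1n0.
  by move=> t /andP[? ?]; apply: phi_gt0; lra.
have [rk ak] : (r <= k)%N /\ (a <= k)%N by split; lia.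
have [Mr Mr_ge0 HMr] := continuous_bounded_itv ler01 (derive1n_continuous rk).
have [Ma Ma_ge0 HMa] := continuous_bounded_itv ler01 (derive1n_continuous ak).
exists (C0 + C1 + Mr * Ma / c); first by rewrite !addr_ge0 // divr_ge0 ?mulr_ge0 // ltW.
move=> t /andP[t_ge0 t_le1].
have phi_le_norm C : 0 <= C -> C * phi t <= C * `|phi t|.
  by move=> C_ge0; rewrite ler_wpM2l // ler_norm.
have C0_le := phi_le_norm _ C0_ge0; have C1_le := phi_le_norm _ C1_ge0.
have C0phi_ge0 := mulr_ge0 C0_ge0 (normr_ge0 (phi t)).
have C1phi_ge0 := mulr_ge0 C1_ge0 (normr_ge0 (phi t)).
have Qphi_ge0 : 0 <= Mr * Ma / c * `|phi t| by rewrite !mulr_ge0 // invr_ge0 ltW.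
have [te0|e0t] := leP t e0; first by have := HC0 t ltac:(lra); lra.
have [e1t|te1] := leP (1 - e1) t; first by have := HC1 t ltac:(lra); lra.
have mid : `|derive1n r phi t * derive1n a phi t| <= Mr * Ma / c * `|phi t|.
  rewrite normrM; apply: le_trans (_ : Mr * Ma <= _).
    by apply: ler_pM; rewrite ?HMr ?HMa ?t_ge0.
  rewrite -mulrA ler_peMr ?mulr_ge0 // ler_pdivlMl // mulr1.
  by apply: le_trans (ler_norm _); apply: phi_ge_c; lra.
lra.
Qed.

End bump.

Theorem corollary4p6 (R : realType) (p : \bar R) (m k : nat) (phi : R -> R) :
  (1%:E <= p)%E ->
  C0k k phi ->
  supp phi `<=` `[0, 1] ->
  (forall t : R, 0 < t < 1 -> 0 < phi t) ->
  (m.+1 < k)%N ->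
  finite_set [set t : R | t \in `[0, 1] /\ derive1n k phi t = 0] ->
  forall r a : nat, (r + a <= m)%N ->
    Linfty01 (fun t => `|derive1n r phi t * derive1n a phi t| / (`|phi t| `^ inv_exp p)).
Proof.
move=> p_ge1 phi_C0k supp_phi phi_gt0 mk zeros_finite r a ram.
have rak : (r + a < k)%N by lia.
have [C C_ge0 HC] := derive1n_mul_le_phi phi_C0k supp_phi phi_gt0 zeros_finite rak.
have [rk ak] : (r <= k)%N /\ (a <= k)%N by split; lia.
have [Mr Mr_ge0 HMr] := continuous_bounded_itv ler01 (derive1n_continuous phi_C0k rk).
have [Ma Ma_ge0 HMa] := continuous_bounded_itv ler01 (derive1n_continuous phi_C0k ak).
apply: (Linfty01_bound _ (M := C + Mr * Ma)).
  apply: measurable_mul_div_powR; first exact (derive1n_continuous phi_C0k rk).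
    exact (derive1n_continuous phi_C0k ak).
  exact (derive1n_continuous phi_C0k (leq0n k)).
move=> t t01; apply: div_powR_le => //; first exact: inv_exp_itv.
- exact: mulr_ge0.
- exact: HC.
- by rewrite normrM ler_pM ?HMr ?HMa.
Qed.
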